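(* Let $A$ be a real symmetric matrix with $\mathrm{Tr}(A^2)=1$, let $q\in\mathbb{N}$, and let $\rho(A)=\max\{|\lambda|:\lambda\in\mathrm{spec}(A)\}$. If $\rho(A)\le 1/q$, then $$\mathcal{R}_q(A)\ge\prod_{k=1}^{q-1}\big(1-k\rho(A)\big).$$
   Context: For a real symmetric matrix $A$ with eigenvalues $(\lambda_i)$ (with multiplicity), $\mathcal{R}_q(A)=\sum\lambda_{i_1}^2\cdots\lambda_{i_q}^2$, the sum over ordered $q$-tuples of pairwise distinct indices. *)

From mathcomp Require Import all_boot all_order all_algebra.
From mathcomp Require Import reals.
Set Implicit Arguments. Unset Strict Implicit. Unset Printing Implicit Defensive.
Import Order.TTheory GRing.Theory Num.Theory.
Local Open Scope ring_scope.

(* [spectrum A lam]: lam lists the eigenvalues of A with multiplicity,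
   i.e. the characteristic polynomial of A factors as prod_i ('X - lam_i). *)
Definition spectrum (R : ringType) (n : nat) (A : 'M[R]_n) (lam : 'I_n -> R) : Prop :=
  char_poly A = \prod_(i < n) ('X - (lam i)%:P).

Definition Rq (R : ringType) (n q : nat) (lam : 'I_n -> R) : R :=
  \sum_(f : {ffun 'I_q -> 'I_n} | injectiveb f) \prod_(k < q) (lam (f k)) ^+ 2.

Definition specrad (R : realDomainType) (n : nat) (lam : 'I_n -> R) : R :=
  \big[Num.max/0]_(i < n) `|lam i|.

From mathcomp Require Import all_boot all_order all_algebra.
From mathcomp Require Import reals.
From mathcomp Require Import lra.
Import Order.TTheory GRing.Theory Num.Theory.
Set Implicit Arguments. Unset Strict Implicit.
Local Open Scope ring_scope.

(* The argument has an algebraic half and a combinatorial half.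
   1. If the characteristic polynomial of A splits with roots lam_i, then
      that of A^2 splits with roots lam_i^2; hence, reading off the
      subleading coefficient, sum_i lam_i^2 = tr(A^2) = 1.
   2. For nonnegative weights w_i with sum_i w_i = 1 and w_i <= rho^2, let
      S_q be the sum over injective q-tuples f of prod_k w_(f k).  Adding a
      last coordinate outside the image of f gives
         S_(q+1) = sum_f (prod_k w_(f k)) * sum_(j not in im f) w_j,
      and the inner sum is at least 1 - q rho^2 >= 1 - q rho, so induction
      on q gives S_q >= prod_(k < q) (1 - k rho).
   The theorem is the instance w_i = lam_i^2, rho = rho(A), for which
   S_q is exactly R_q(A). *)

Section SquaredSpectrum.
Variable R : comNzRingType.

(* Substituting X^2 into polynomials is injective: it only spreads out the
   coefficients. *)
Lemma comp_polyX2_inj (p r : {poly R}) : p \Po 'X^2 = r \Po 'X^2 -> p = r.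
Proof.
move=> e; apply/polyP => i.
have := congr1 (fun t : {poly R} => t`_(i * 2)%N) e => /=.
by rewrite !coef_comp_poly_Xn // dvdn_mull // mulnK.
Qed.

(* The matrix identity X^2 - A^2 = (X - A)(X + A), with X^2 obtained by
   substituting X^2 into the characteristic matrix of A^2. *)
Lemma char_poly_mx_sqr n (A : 'M[R]_n) :
  map_mx (comp_poly 'X^2) (char_poly_mx (A *m A)) =
  char_poly_mx A *m ('X%:M + map_mx polyC A).
Proof.
rewrite /char_poly_mx mulmxBl !mulmxDr mul_mx_scalar mul_scalar_mx.
have -> : map_mx (comp_poly 'X^2) ('X%:M - map_mx polyC (A *m A)) =
          ('X^2)%:M - map_mx polyC (A *m A).
  apply/matrixP => i j; rewrite !mxE; case: (i == j) => /=;
  by rewrite ?mulr1n ?mulr0n ?comp_polyB ?comp_polyX ?comp_polyC ?comp_poly0.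
by rewrite map_mxM -mul_mx_scalar -scalar_mxM -expr2 mul_mx_scalar opprD addrA addrK.
Qed.

Lemma det_char_poly_mx_opp n (A : 'M[R]_n) :
  \det ('X%:M + map_mx polyC A) = (-1) ^+ n * (char_poly A \Po - 'X).
Proof.
have opp_mx : map_mx (comp_poly (- 'X)) (char_poly_mx A) =
              (-1) *: ('X%:M + map_mx polyC A).
  apply/matrixP => i j; rewrite !mxE; case: (i == j) => /=;
  rewrite ?mulr1n ?mulr0n ?comp_polyB ?comp_polyX ?comp_polyC ?comp_poly0;
  by rewrite ?add0r ?sub0r mulN1r // opprD.
have := det_map_mx (comp_poly (- 'X)) (char_poly_mx A).
rewrite opp_mx detZ /= -/(char_poly A) => <-.
by rewrite mulrA -exprD -signr_odd oddD addbb mul1r.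
Qed.

Lemma char_poly_sqr n (A : 'M[R]_n) (lam : 'I_n -> R) :
  char_poly A = \prod_(i < n) ('X - (lam i)%:P) ->
  char_poly (A *m A) = \prod_(i < n) ('X - (lam i ^+ 2)%:P).
Proof.
move=> chiA; apply: comp_polyX2_inj.
have := det_map_mx (comp_poly 'X^2) (char_poly_mx (A *m A)).
rewrite char_poly_mx_sqr det_mulmx det_char_poly_mx_opp /=.
rewrite -/(char_poly (A *m A)) -/(char_poly A) => <-.
rewrite chiA rmorph_prod /=.
have -> : \prod_(i < n) (('X - (lam i)%:P) \Po - 'X) =
          \prod_(i < n) - ('X + (lam i)%:P).
  by apply: eq_bigr => i _; rewrite comp_polyB comp_polyX comp_polyC opprD.
rewrite prodrN card_ord [X in _ * X]mulrA -exprD -signr_odd oddD addbb mul1r.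
rewrite -big_split rmorph_prod /=; apply: eq_bigr => i _.
by rewrite comp_polyB comp_polyX comp_polyC rmorphXn -subr_sqr.
Qed.

Lemma mxtrace_sqr_spectrum n (A : 'M[R]_n) (lam : 'I_n -> R) :
  spectrum A lam -> \tr (A *m A) = \sum_(i < n) lam i ^+ 2.
Proof.
case: n A lam => [|n] A lam; first by rewrite /mxtrace !big_ord0.
move=> /char_poly_sqr chiA2; have := char_poly_trace (A *m A) (ltn0Sn n).
have := @coefPn_prod_XsubC R [seq lam i ^+ 2 | i <- enum 'I_n.+1].
rewrite size_map size_enum_ord !big_map -!enumT !big_enum /= => coef_subleading.
by rewrite chiA2 coef_subleading // => /oppr_inj.
Qed.

End SquaredSpectrum.

Section InjectiveTupleSums.
Variable R : pzSemiRingType.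
Variable n : nat.
Variable w : 'I_n -> R.

Definition injsum (q : nat) : R :=
  \sum_(f : {ffun 'I_q -> 'I_n} | injectiveb f) \prod_(k < q) w (f k).

Definition extend_tuple q (fj : {ffun 'I_q -> 'I_n} * 'I_n) : {ffun 'I_q.+1 -> 'I_n} :=
  [ffun k => if unlift ord_max k is Some k' then fj.1 k' else fj.2].

Definition split_tuple q (g : {ffun 'I_q.+1 -> 'I_n}) : {ffun 'I_q -> 'I_n} * 'I_n :=
  ([ffun k => g (lift ord_max k)], g ord_max).

Lemma extend_tuple_bij q : bijective (@extend_tuple q).
Proof.
exists (@split_tuple q).
  case=> f j; rewrite /split_tuple /extend_tuple /=.
  congr pair; last by rewrite ffunE unlift_none.
  by apply/ffunP => k; rewrite !ffunE liftK.
move=> g; apply/ffunP => k; rewrite /split_tuple /extend_tuple !ffunE /=.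
by case: unliftP => [k' ->|->]; rewrite ?ffunE.
Qed.

Lemma extend_tuple_injectiveb q f j :
  injectiveb (@extend_tuple q (f, j)) = injectiveb f && (j \notin codom f).
Proof.
apply/injectiveP/andP => [ext_inj | [/injectiveP f_inj j_new]].
  split.
    apply/injectiveP => a b e; apply: (@lift_inj _ ord_max); apply: ext_inj.
    by rewrite !ffunE !liftK.
  apply/negP => /codomP [a ja]; have := ext_inj ord_max (lift ord_max a).
  rewrite !ffunE unlift_none liftK /= => /(_ ja) e.
  by have := neq_lift ord_max a; rewrite -e eqxx.
move=> a b; rewrite !ffunE /=.
case: unliftP => [a' ->|->]; case: unliftP => [b' ->|->] //.
- by move/f_inj ->.
- by move=> e; case/negP: j_new; rewrite -e codom_f.
- by move=> e; case/negP: j_new; rewrite e codom_f.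
Qed.

Lemma extend_tuple_last q f j : @extend_tuple q (f, j) ord_max = j.
Proof. by rewrite ffunE unlift_none. Qed.

Lemma extend_tuple_widen q f j (k : 'I_q) :
  @extend_tuple q (f, j) (widen_ord (leqnSn q) k) = f k.
Proof.
have -> : widen_ord (leqnSn q) k = lift ord_max k.
  by apply/val_inj; rewrite /= /bump leqNgt ltn_ord.
by rewrite ffunE liftK.
Qed.

(* Only the empty tuple has length 0. *)
Lemma injsum0 : injsum 0 = 1.
Proof.
rewrite /injsum (big_pred1 (ffun0 (card_ord 0))) ?big_ord0 // => f /=.
have -> : f == ffun0 (card_ord 0) by apply/eqP/ffunP => -[].
by apply/injectiveP => -[].
Qed.

(* Recursion: an injective (q+1)-tuple is an injective q-tuple followed by
   an index outside its image. *)
Lemma injsumS q : injsum q.+1 = \sum_(f : {ffun 'I_q -> 'I_n} | injectiveb f)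
   (\prod_(k < q) w (f k)) * \sum_(j | j \notin codom f) w j.
Proof.
rewrite /injsum (reindex (@extend_tuple q)); last exact/onW_bij/extend_tuple_bij.
rewrite (eq_bigl (fun fj : {ffun 'I_q -> 'I_n} * 'I_n => injectiveb fj.1 && (fj.2 \notin codom fj.1))); last first.
  by case=> f j; rewrite extend_tuple_injectiveb.
rewrite (eq_bigr (fun fj : {ffun 'I_q -> 'I_n} * 'I_n => \prod_(k < q.+1) w (@extend_tuple q (fj.1, fj.2) k)));
  last by case.
rewrite -(pair_big_dep (fun f : {ffun 'I_q -> 'I_n} => injectiveb f)
   (fun f j => j \notin codom f) (fun f j => \prod_(k < q.+1) w (@extend_tuple q (f, j) k))) /=.
apply: eq_bigr => f _; rewrite mulr_sumr; apply: eq_bigr => j _.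
rewrite big_ord_recr /= extend_tuple_last; congr (_ * _).
by apply: eq_bigr => k _; rewrite extend_tuple_widen.
Qed.

End InjectiveTupleSums.

Section InjectiveSumLowerBound.
Variable R : realDomainType.
Variable n : nat.
Variable w : 'I_n -> R.
Variable rho : R.
Hypothesis w_ge0 : forall i, 0 <= w i.
Hypothesis w_sum1 : \sum_i w i = 1.
Hypothesis rho_ge0 : 0 <= rho.
Hypothesis w_le_rho2 : forall i, w i <= rho ^+ 2.

(* Removing the q indices of an injective tuple loses at most q rho^2 of
   the total weight 1. *)
Lemma sum_outside_codom q (f : {ffun 'I_q -> 'I_n}) : injective f ->
  1 - q%:R * rho ^+ 2 <= \sum_(j | j \notin codom f) w j.
Proof.
move=> f_inj.
have split_sum : \sum_(j in codom f) w j + \sum_(j | j \notin codom f) w j = 1.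
  by rewrite -w_sum1 [RHS](bigID (mem (codom f))).
have codom_small : \sum_(j in codom f) w j <= q%:R * rho ^+ 2.
  apply: le_trans (_ : \sum_(j in codom f) rho ^+ 2 <= _); first exact: ler_sum.
  by rewrite sumr_const card_codom // card_ord mulr_natl.
lra.
Qed.

Lemma injsum_step q : injsum w q * (1 - q%:R * rho ^+ 2) <= injsum w q.+1.
Proof.
rewrite injsumS /injsum mulr_suml; apply: ler_sum => f /injectiveP f_inj.
apply: ler_wpM2l; first exact: prodr_ge0.
exact: sum_outside_codom.
Qed.

(* The main estimate, by induction on q using [injsum_step] and
   1 - k rho <= 1 - k rho^2 for 0 <= rho <= 1. *)
Lemma injsum_ge_prod q :
  q%:R * rho <= 1 -> \prod_(k < q) (1 - k%:R * rho) <= injsum w q.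
Proof.
elim: q => [_|q IH qrho_le1]; first by rewrite big_ord0 injsum0.
rewrite -addn1 natrD mulrDl mul1r in qrho_le1.
have q_ge0 : 0 <= q%:R :> R by rewrite ler0n.
have rho_le1 : rho <= 1 by nra.
have factor_ge0 : 0 <= 1 - q%:R * rho by nra.
have factor_le : 1 - q%:R * rho <= 1 - q%:R * rho ^+ 2.
  have : 0 <= q%:R * rho * (1 - rho) by rewrite !mulr_ge0 // subr_ge0.
  by rewrite expr2; nra.
rewrite big_ord_recr /=; apply: le_trans (injsum_step q).
apply: ler_pM => //; last by apply: IH; nra.
apply: prodr_ge0 => k _; rewrite subr_ge0.
apply: le_trans (_ : q%:R * rho <= 1); last by nra.
by rewrite ler_wpM2r // ler_nat ltnW.
Qed.

End InjectiveSumLowerBound.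

Section SpectralRadius.
Variable R : realDomainType.
Variable n : nat.
Variable lam : 'I_n -> R.

Lemma specrad_ge0 : 0 <= specrad lam.
Proof. by rewrite /specrad; elim/big_ind: _ => // x y x_ge0 _; rewrite le_max x_ge0. Qed.

Lemma norm_le_specrad i : `|lam i| <= specrad lam.
Proof. by rewrite /specrad (bigD1 i) //= le_max lexx. Qed.

Lemma sqr_le_specrad i : lam i ^+ 2 <= specrad lam ^+ 2.
Proof.
by rewrite -real_normK ?num_real // lerXn2r ?nnegrE ?specrad_ge0 ?norm_le_specrad.
Qed.

End SpectralRadius.

Theorem lemma4p2 (R : realType) (n q : nat) (A : 'M[R]_n) (lam : 'I_n -> R) :
  A^T = A ->
  spectrum A lam ->
  \tr (A *m A) = 1 ->
  q%:R * specrad lam <= 1 ->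
  Rq q lam >= \prod_(1 <= k < q) (1 - k%:R * specrad lam).
Proof.
move=> _ spec_lam tr_sqr1 q_rho_le1.
have sum_sqr1 : \sum_i lam i ^+ 2 = 1 by rewrite -(mxtrace_sqr_spectrum spec_lam).
(* The factor k = 0 of the product is 1. *)
have -> : \prod_(1 <= k < q) (1 - k%:R * specrad lam) =
          \prod_(k < q) (1 - k%:R * specrad lam).
  case: q {q_rho_le1} => [|q]; first by rewrite big_geq ?big_ord0.
  rewrite -(big_mkord xpredT (fun k => 1 - k%:R * specrad lam)).
  by rewrite [in RHS]big_ltn // mul0r subr0 mul1r.
(* [Rq q lam] is by definition [injsum (fun i => lam i ^+ 2) q]. *)
apply: (injsum_ge_prod (fun i => sqr_ge0 (lam i)) sum_sqr1 (specrad_ge0 lam)) => //.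
exact: sqr_le_specrad.
Qed.
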